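(* Let $a<b$ be real, $\phi:\mathbb{R}^n\to\mathbb{R}$ Schur-concave on $[a,b]^n$, $\alpha\in\mathbb{R}$, and $S^\alpha=\{(x,t)\mid\phi(x)\le t\le\alpha,\ x\in[a,b]^n\}$. For $x\in[a,b]^n$ let $S(x)=\sum_{i=1}^n(x_i-a)$. For $s\in[0,n(b-a)]$ let $i^s=\max\{i\in\{0,\dots,n\}\mid i(b-a)<s\}$ (with $i^0=0$) and define $u^s\in\mathbb{R}^n$ by $u^s_i=b$ for $i\le i^s$, $u^s_{i^s+1}=a+s-(b-a)i^s$, and $u^s_i=a$ for $i>i^s+1$. Let $\Theta^\alpha=\{(x,t)\mid\phi(u^{S(x)})\le t\le\alpha,\ x\in[a,b]^n\}$. Then $\mathrm{conv}(S^\alpha)=\mathrm{conv}(\Theta^\alpha)$. Moreover, if $\phi$ is component-wise convex on $[a,b]^n$, then $\Theta^\alpha$ is convex.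
   Context: $\phi$ is Schur-concave on $C$ if for all $x,y\in C$, $x\ge_m y$ implies $\phi(x)\le\phi(y)$, where $x\ge_m y$ means $\sum_{i=1}^j x_{[i]}\ge\sum_{i=1}^j y_{[i]}$ for $j<n$ with equality for $j=n$ ($x_{[i]}$ the $i$-th largest entry). $\phi$ is component-wise convex if it is convex in each single coordinate when all other coordinates are fixed. *)

(* reals are an arbitrary realFieldType (purely order-algebraic statement). *)
From HB Require Import structures.
From mathcomp Require Import all_boot all_order all_algebra.
Set Implicit Arguments. Unset Strict Implicit. Unset Printing Implicit Defensive.
Import Order.TTheory GRing.Theory Num.Theory.
Local Open Scope ring_scope.

Section Defs.
Variables (R : realFieldType) (n : nat).

Definition vec := 'I_n -> R.

Definition in_box (a b : R) (x : vec) : Prop := forall i, a <= x i <= b.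

(* x_[i] : entries sorted in nonincreasing order (0-indexed) *)
Definition dsorted (x : vec) : seq R := sort (fun u v => v <= u) [seq x i | i <- enum 'I_n].
Definition xdec (x : vec) (i : nat) : R := nth 0 (dsorted x) i.

Definition majorizes (x y : vec) : Prop :=
  (forall j, (j < n)%N -> \sum_(i < j) xdec y i <= \sum_(i < j) xdec x i)
  /\ \sum_(i < n) xdec x i = \sum_(i < n) xdec y i.

Definition schur_concave_on (C : vec -> Prop) (phi : vec -> R) : Prop :=
  forall x y, C x -> C y -> majorizes x y -> phi x <= phi y.

Definition setc (x : vec) (i : 'I_n) (v : R) : vec := fun j => if j == i then v else x j.

Definition componentwise_convex_on (a b : R) (phi : vec -> R) : Prop :=
  forall x i s1 s2 l, in_box a b x -> a <= s1 <= b -> a <= s2 <= b -> 0 <= l <= 1 ->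
    phi (setc x i (l * s1 + (1 - l) * s2)) <= l * phi (setc x i s1) + (1 - l) * phi (setc x i s2).

Definition conv (A : vec * R -> Prop) (z : vec * R) : Prop :=
  exists m (l : 'I_m -> R) (p : 'I_m -> vec * R),
    (forall k, 0 <= l k) /\ \sum_(k < m) l k = 1 /\ (forall k, A (p k)) /\
    (forall i, z.1 i = \sum_(k < m) l k * (p k).1 i) /\ z.2 = \sum_(k < m) l k * (p k).2.

Definition convex_set (A : vec * R -> Prop) : Prop :=
  forall p q l, A p -> A q -> 0 <= l <= 1 ->
    A ((fun i => l * p.1 i + (1 - l) * q.1 i), l * p.2 + (1 - l) * q.2).

Definition Ssum (a : R) (x : vec) : R := \sum_(i < n) (x i - a).

(* i^s = max { i in {0..n} | i(b-a) < s }, with max of empty set = 0 *)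
Definition istar (a b s : R) : nat := \max_(i < n.+1 | ((i : nat)%:R * (b - a) < s)%R) (i : nat).

(* u^s, 0-indexed: positions j < i^s get b, position i^s gets a+s-(b-a)i^s, rest a *)
Definition ustar (a b s : R) : vec := fun j =>
  if (j < istar a b s)%N then b
  else if (j : nat) == istar a b s then a + s - (b - a) * (istar a b s)%:R
  else a.

Definition Salpha (a b : R) (phi : vec -> R) (alpha : R) (z : vec * R) : Prop :=
  in_box a b z.1 /\ phi z.1 <= z.2 <= alpha.

Definition Theta (a b : R) (phi : vec -> R) (alpha : R) (z : vec * R) : Prop :=
  in_box a b z.1 /\ phi (ustar a b (Ssum a z.1)) <= z.2 <= alpha.

End Defs.

From HB Require Import structures.
From mathcomp Require Import all_boot all_order all_algebra.
From mathcomp Require Import ring lra zify.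
From Stdlib Require Import FunctionalExtensionality.
Set Implicit Arguments. Unset Strict Implicit. Unset Printing Implicit Defensive.
Import Order.TTheory GRing.Theory Num.Theory.
Local Open Scope ring_scope.

(* Write [phiu s := phi (u^s)].  The vector [u^(S x)] has the same coordinate sum as [x]
   and at most one coordinate strictly inside [(a, b)], so it majorizes [x] and Schur
   concavity gives [phiu (S x) <= phi x]; hence [S^alpha] lies in [Theta^alpha].
   Conversely, if [x] has two interior coordinates, moving mass between them in either
   direction until one of them reaches the boundary gives two points of [Theta^alpha]
   with the same [S] and fewer interior coordinates, of which [(x, t)] is a convex
   combination; when at most one coordinate is interior, [x] and [u^(S x)] majorize each
   other and [phi x = phiu (S x)].

   [Theta^alpha] is the part below [alpha] of the epigraph of the composition of [phiu]
   with the affine map [S], so it is convex as soon as [phiu] is convex on [[0, n (b - a)]].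
   On each [[k (b - a), (k + 1) (b - a)]] only coordinate [k] of [u^s] moves, and
   componentwise convexity applies.  At a breakpoint [q], perturbing [u^q] in the two
   adjacent coordinates [k] and [k + 1] relates [phiu q] to [phiu] on both sides up to an
   error that vanishes with the perturbation. *)

Section ExtremalMajorization.
Variables (R : realFieldType) (n : nat) (a b : R).
Implicit Types x y : vec R n.

Definition interior (v : R) : bool := a < v < b.
Definition interior_count x : nat := #|[pred i | interior (x i)]|.

Let ge_rel : rel R := fun u v => v <= u.

Lemma size_dsorted x : size (dsorted x) = n.
Proof. by rewrite size_sort size_map size_enum_ord. Qed.

Lemma perm_dsorted x : perm_eq (dsorted x) [seq x i | i <- enum 'I_n].
Proof. by rewrite /dsorted perm_sort. Qed.

Lemma xdec_nonincr x i j : (i <= j < n)%N -> xdec x j <= xdec x i.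
Proof.
move=> /andP[le_ij lt_jn].
have ge_trans : transitive ge_rel by move=> u v w /= h1 h2; apply: le_trans h2 h1.
have ge_total : total ge_rel by move=> u v; rewrite /ge_rel /= orbC le_total.
have sorted_x : sorted ge_rel (dsorted x) by apply: sort_sorted.
apply: (sorted_leq_nth ge_trans (fun u => lexx u) 0 sorted_x) =>/=.
all: rewrite ?inE ?size_sort ?size_map -?enumT ?size_enum_ord; lia.
Qed.

Lemma xdec_in_box x i : in_box a b x -> (i < n)%N -> a <= xdec x i <= b.
Proof.
move=> hx lt_in; have : xdec x i \in dsorted x by rewrite mem_nth ?size_dsorted.
by rewrite (perm_mem (perm_dsorted x)) => /mapP[j _ ->].
Qed.

Lemma sum_xdec x : \sum_(i < n) xdec x i = \sum_(i < n) x i.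
Proof.
rewrite -(big_mkord xpredT (xdec x)) /xdec.
have := big_nth 0 (r := dsorted x) xpredT id; rewrite size_dsorted /= => <-.
by rewrite (perm_big _ (perm_dsorted x)) big_map big_enum.
Qed.

Lemma count_interior_dsorted x : count interior (dsorted x) = interior_count x.
Proof.
rewrite (permP (perm_dsorted x)) count_map -sum1_count big_enum_cond /=.
by rewrite sum1_card.
Qed.

Lemma count_nth_gt1 (P : pred R) (s : seq R) i1 i2 : (i1 < i2 < size s)%N ->
  P (nth 0 s i1) -> P (nth 0 s i2) -> (1 < count P s)%N.
Proof.
move=> /andP[lt12 lt2s] P1 P2.
rewrite -(cat_take_drop i2 s) count_cat (drop_nth 0 lt2s) /= P2.
suff : (0 < count P (take i2 s))%N by lia.
rewrite -has_count; apply/hasP; exists (nth 0 s i1) => //.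
by rewrite -(nth_take 0 lt12) mem_nth // size_take lt2s.
Qed.

Lemma prefix_le_top x j : in_box a b x -> (j <= n)%N ->
  \sum_(i < j) xdec x i <= j%:R * b.
Proof.
move=> hx le_jn; rewrite mulr_natl -[in b *+ j](card_ord j) -sumr_const.
by apply: ler_sum => i _; case/andP: (xdec_in_box hx (leq_trans (ltn_ord i) le_jn)).
Qed.

Lemma sum_xdec_split x j : (j <= n)%N ->
  \sum_(i < n) x i = \sum_(i < j) xdec x i + \sum_(j <= i < n) xdec x i.
Proof.
by move=> le_jn; rewrite -sum_xdec -!(big_mkord xpredT (xdec x)) (@big_cat_nat _ _ _ j 0 n) //=.
Qed.

Lemma prefix_le_bottom x j : in_box a b x -> (j <= n)%N ->
  \sum_(i < j) xdec x i <= \sum_(i < n) x i - (n - j)%:R * a.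
Proof.
move=> hx le_jn; rewrite (sum_xdec_split x le_jn) lerBrDr lerD2l.
rewrite mulr_natl -sumr_const_nat big_nat_cond [leRHS]big_nat_cond.
by apply: ler_sum => i /andP[/andP[_ lt_in] _]; case/andP: (xdec_in_box hx lt_in).
Qed.

Lemma xdec_extremal y j : in_box a b y -> (interior_count y <= 1)%N -> (j <= n)%N ->
  (forall i, (i < j)%N -> xdec y i = b) \/ (forall i, (j <= i < n)%N -> xdec y i = a).
Proof.
move=> hy hcount; case: j => [|j] lt_jn; first by left.
have [top|not_top] := eqVneq (xdec y j) b.
  left=> i lt_ij; apply/eqP; rewrite eq_le.
  case/andP: (xdec_in_box hy (leq_trans lt_ij lt_jn)) => _ ->.
  by rewrite -top xdec_nonincr // -ltnS lt_ij.
right=> i /andP[lt_ji lt_in]; apply/eqP; rewrite eq_le.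
case/andP: (xdec_in_box hy lt_in) => -> _; rewrite andbT leNgt; apply/negP => gt_a.
have le_ij : xdec y i <= xdec y j by rewrite xdec_nonincr // ltnW.
have /andP[_ le_jb] := xdec_in_box hy lt_jn.
have lt_jb : xdec y j < b by rewrite lt_neqAle not_top.
suff : (1 < count interior (dsorted y))%N by rewrite count_interior_dsorted; lia.
apply: (@count_nth_gt1 _ _ j i); first by rewrite size_dsorted lt_ji.
- by rewrite /interior -/(xdec y j) lt_jb (lt_le_trans gt_a).
- by rewrite /interior -/(xdec y i) gt_a (le_lt_trans le_ij).
Qed.

Lemma majorizes_extremal x y : in_box a b x -> in_box a b y ->
  (interior_count y <= 1)%N -> \sum_(i < n) x i = \sum_(i < n) y i -> majorizes y x.
Proof.
move=> hx hy hcount sum_xy; split; last by rewrite !sum_xdec.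
move=> j lt_jn; have le_jn := ltnW lt_jn.
case: (xdec_extremal hy hcount le_jn) => extr.
  rewrite [leRHS](eq_bigr (fun=> b)) => [|i _]; last exact: extr.
  by rewrite sumr_const card_ord -mulr_natl prefix_le_top.
have -> : \sum_(i < j) xdec y i = \sum_(i < n) y i - (n - j)%:R * a.
  rewrite (sum_xdec_split y le_jn) mulr_natl -sumr_const_nat.
  suff -> : \sum_(j <= i < n) xdec y i = \sum_(j <= i < n) a by rewrite addrK.
  by rewrite big_nat_cond [RHS]big_nat_cond; apply: eq_bigr => i /andP[/extr ->].
by rewrite -sum_xy prefix_le_bottom.
Qed.

End ExtremalMajorization.

Section Pieces.
Variables (R : realFieldType) (n : nat) (a b : R).
Hypothesis hab : a < b.
Local Notation w := (b - a).
Let w_gt0 : 0 < w. Proof. by rewrite subr_gt0. Qed.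

Definition upiece (k : nat) (s : R) : vec R n := fun j =>
  if (j < k)%N then b else if (j : nat) == k then a + s - (b - a) * k%:R else a.

Lemma ustarE s : ustar a b s = upiece (istar n a b s) s.
Proof. by []. Qed.

Lemma ler_natw (i k : nat) : (i <= k)%N -> i%:R * w <= k%:R * w.
Proof. by move=> le_ik; rewrite ler_wpM2r ?ler_nat // ltW. Qed.

Lemma istar_eq k s : (k <= n)%N -> k%:R * w < s <= k.+1%:R * w -> istar n a b s = k.
Proof.
move=> le_kn /andP[lt_ks le_sk]; apply/eqP; rewrite eqn_leq; apply/andP; split.
  apply/bigmax_leqP => i /= lt_is; rewrite leqNgt; apply/negP => lt_ki.
  by have := ler_natw lt_ki; lra.
have lt_kn1 : (k < n.+1)%N by rewrite ltnS.
exact: (@leq_bigmax_cond _ (fun i : 'I_n.+1 => i%:R * w < s) (fun i => i : nat) (Ordinal lt_kn1)).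
Qed.

Lemma istar_le0 s : s <= 0 -> istar n a b s = 0%N.
Proof.
move=> le_s0; apply/eqP; rewrite -leqn0; apply/bigmax_leqP => i /= lt_is.
by have := ler_natw (leq0n i); rewrite mul0r; lra.
Qed.

Lemma upiece_breakpoint k : upiece k (k.+1%:R * w) = upiece k.+1 (k.+1%:R * w).
Proof.
apply: functional_extensionality => j; rewrite /upiece ltnS.
case: ltngtP => //= _; first by case: eqP => // _; ring.
by rewrite -natr1; ring.
Qed.

Lemma ustar_piece k s : (k <= n)%N -> k%:R * w <= s <= k.+1%:R * w -> ustar a b s = upiece k s.
Proof.
move=> le_kn /andP[le_ks le_sk]; have [lt_ks|ge_ks] := ltrP (k%:R * w) s.
  by rewrite ustarE (istar_eq le_kn) ?lt_ks.
have -> : s = k%:R * w by apply/eqP; rewrite eq_le le_ks ge_ks.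
case: k le_kn {le_ks le_sk ge_ks} => [|k] le_kn.
  by rewrite mul0r ustarE istar_le0.
rewrite ustarE -upiece_breakpoint (istar_eq (ltnW le_kn)) //.
by rewrite lexx andbT ltr_pM2r // ltr_nat.
Qed.

Lemma upiece_in_box k s : k%:R * w <= s <= k.+1%:R * w -> in_box a b (upiece k s).
Proof.
move=> /andP[le_ks le_sk] j; rewrite /upiece.
case: ltnP => _; first by rewrite lexx ltW.
case: eqP => _; last by rewrite lexx ltW.
by move: le_sk; rewrite -natr1 => le_sk; apply/andP; split; lra.
Qed.

Lemma Ssum_upiece k s : (k < n)%N -> Ssum a (upiece k s) = s.
Proof.
move=> lt_kn; rewrite /Ssum /upiece.
rewrite -(big_mkord xpredT (fun j =>
  (if (j < k)%N then b else if j == k then a + s - w * k%:R else a) - a)).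
rewrite (@big_cat_nat _ _ _ k 0 n) ?(ltnW lt_kn) //= (big_ltn lt_kn).
rewrite big_nat_cond (eq_bigr (fun=> w)); last first.
  by move=> i /andP[/andP[_ ->] _].
rewrite -big_nat_cond sumr_const_nat subn0 big_nat_cond big1; last first.
  by move=> i /andP[/andP[lt_ki _] _]; rewrite ltnNge ltnW //= gtn_eqF // subrr.
by rewrite ltnn eqxx -mulr_natl; ring.
Qed.

Lemma interior_count_upiece k s : (k < n)%N -> (interior_count a b (upiece k s) <= 1)%N.
Proof.
move=> lt_kn; rewrite -(card1 (Ordinal lt_kn)); apply: subset_leq_card.
apply/subsetP => j; rewrite !inE /interior /upiece.
case: ltnP => _; first by rewrite ltxx andbF.
by case: eqP => [eq_jk _|_]; [apply/eqP/val_inj | rewrite ltxx].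
Qed.

Lemma Ssum_range (x : vec R n) : in_box a b x -> 0 <= Ssum a x <= n%:R * w.
Proof.
move=> hx; apply/andP; split.
  by apply: sumr_ge0 => i _; case/andP: (hx i); rewrite subr_ge0.
rewrite mulr_natl -[in w *+ n](card_ord n) -sumr_const.
by apply: ler_sum => i _; case/andP: (hx i) => _; rewrite lerD2r.
Qed.

Lemma exists_piece s : (0 < n)%N -> 0 <= s <= n%:R * w ->
  exists2 k, (k < n)%N & k%:R * w <= s <= k.+1%:R * w.
Proof.
move=> + /andP[ge_s0]; elim: n => [//|[|m] IH] _ le_sm.
  by exists 0%N; rewrite // mul0r ge_s0.
have [le_s|gt_s] := lerP s (m.+1%:R * w); last by exists m.+1; rewrite // ltW.
by have [k lt_km hk] := IH isT le_s; exists k; first exact: ltnW.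
Qed.

Lemma ustar_spec s : 0 <= s <= n%:R * w ->
  [/\ in_box a b (ustar a b s : vec R n), Ssum a (ustar a b s : vec R n) = s
    & (interior_count a b (ustar a b s : vec R n) <= 1)%N].
Proof.
move=> hs; have [n0|n_gt0] := posnP n.
  have s0 : s = 0 by move: hs; rewrite n0 mul0r; lra.
  split; first by move=> [i lt_in]; move: lt_in; rewrite n0.
    by rewrite /Ssum big1 // => [[i lt_in]]; move: lt_in; rewrite n0.
  by apply: leq_trans (max_card _) _; rewrite card_ord n0.
have [k lt_kn hk] := exists_piece n_gt0 hs.
rewrite (ustar_piece (ltnW lt_kn) hk); split.
- exact: upiece_in_box.
- exact: Ssum_upiece.
- exact: interior_count_upiece.
Qed.

End Pieces.

Lemma Ssum_sum (R : realFieldType) (n : nat) (a : R) (x : vec R n) :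
  Ssum a x = \sum_(i < n) x i - n%:R * a.
Proof. by rewrite /Ssum sumrB sumr_const card_ord mulr_natl. Qed.

Section SchurBounds.
Variables (R : realFieldType) (n : nat) (a b : R).
Hypothesis hab : a < b.
Variable phi : vec R n -> R.
Hypothesis hphi : schur_concave_on (in_box a b) phi.

Lemma phi_ustar_le (x : vec R n) : in_box a b x -> phi (ustar a b (Ssum a x)) <= phi x.
Proof.
move=> hx; have [hu Su count_u] := ustar_spec hab (Ssum_range hx).
apply: hphi => //; apply: majorizes_extremal => //.
by move: Su; rewrite !Ssum_sum => /addIr.
Qed.

Lemma phi_ustar_ge (x : vec R n) : in_box a b x -> (interior_count a b x <= 1)%N ->
  phi x <= phi (ustar a b (Ssum a x)).
Proof.
move=> hx count_x; have [hu Su _] := ustar_spec hab (Ssum_range hx).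
apply: hphi => //; apply: majorizes_extremal => //.
by move: Su; rewrite !Ssum_sum => /addIr.
Qed.

End SchurBounds.

Section ConvexHull.
Variables (R : realFieldType) (n : nat).
Implicit Types (A B K : vec R n * R -> Prop) (z : vec R n * R).

Lemma conv_ext A z : A z -> conv A z.
Proof.
move=> Az; exists 1%N, (fun=> 1), (fun=> z).
rewrite !big_ord1 mul1r; split=> //; split=> //; split=> //.
by split=> // i; rewrite big_ord1 mul1r.
Qed.

Lemma conv_sub A B z : (forall y, A y -> B y) -> conv A z -> conv B z.
Proof.
move=> AB [m [l [p [l_ge0 [sum_l [Ap zp]]]]]].
by exists m, l, p; do 2!split=> //; split=> // k; apply: AB.
Qed.

Lemma convex_set_mem K p q l z : convex_set K -> K p -> K q -> 0 <= l <= 1 ->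
  (forall i, z.1 i = l * p.1 i + (1 - l) * q.1 i) -> z.2 = l * p.2 + (1 - l) * q.2 -> K z.
Proof.
move=> convK Kp Kq l01 z1 z2; rewrite [z]surjective_pairing z2.
by rewrite (functional_extensionality _ _ z1); apply: convK.
Qed.

Definition join_fam T m1 m2 (f : 'I_m1 -> T) (g : 'I_m2 -> T) (i : 'I_(m1 + m2)) : T :=
  match split i with inl k => f k | inr k => g k end.

Lemma sum_join_fam T m1 m2 (F : T -> R) (f : 'I_m1 -> T) (g : 'I_m2 -> T) :
  \sum_(i < m1 + m2) F (join_fam f g i) = \sum_(k < m1) F (f k) + \sum_(k < m2) F (g k).
Proof.
rewrite big_split_ord /join_fam; congr (_ + _); apply: eq_bigr => k _.
  by have -> : split (lshift m2 k) = inl k := unsplitK (inl k).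
by have -> : split (rshift m1 k) = inr k := unsplitK (inr k).
Qed.

Lemma convex_conv A : convex_set (conv A).
Proof.
move=> p q lam [m1 [l1 [p1 [l1_ge0 [sum_l1 [Ap1 [p_1 p_2]]]]]]]
  [m2 [l2 [p2 [l2_ge0 [sum_l2 [Ap2 [q_1 q_2]]]]]]] /andP[lam_ge0 lam_le1].
pose fam := join_fam (fun k => (lam * l1 k, p1 k)) (fun k => ((1 - lam) * l2 k, p2 k)).
have famP (P : R * (vec R n * R) -> Prop) : (forall k, P (lam * l1 k, p1 k)) ->
    (forall k, P ((1 - lam) * l2 k, p2 k)) -> forall i, P (fam i).
  by move=> P1 P2 i; rewrite /fam /join_fam; case: split.
exists (m1 + m2)%N, (fun i => (fam i).1), (fun i => (fam i).2); split; last split; last split.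
- by apply: (famP (fun c => 0 <= c.1)) => k /=; apply: mulr_ge0; rewrite ?subr_ge0.
- by rewrite (sum_join_fam fst) /= -!mulr_sumr sum_l1 sum_l2; ring.
- exact: (famP (fun c => A c.2)).
split=> [i|]; rewrite /= ?p_1 ?q_1 ?p_2 ?q_2 !mulr_sumr.
  rewrite (sum_join_fam (fun c => c.1 * c.2.1 i)) /=.
  by congr (_ + _); apply: eq_bigr => k _; ring.
rewrite (sum_join_fam (fun c => c.1 * c.2.2)) /=.
by congr (_ + _); apply: eq_bigr => k _; ring.
Qed.

Lemma conv_sub_convex K z : convex_set K -> conv K z -> K z.
Proof.
move=> convK [m]; elim: m z => [|m IH] z [l [p [l_ge0 [sum_l [Kp [z_1 z_2]]]]]].
  by move: sum_l; rewrite big_ord0 => /eqP; rewrite eq_sym oner_eq0.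
pose lm := l ord_max; pose l' k := l (widen_ord (leqnSn m) k).
pose p' k := p (widen_ord (leqnSn m) k).
have sum_l' : \sum_(k < m) l' k = 1 - lm.
  by apply/eqP; rewrite eq_sym subr_eq -sum_l big_ord_recr.
have l'_ge0 k : 0 <= l' k by apply: l_ge0.
have sum_recr (v : 'I_m.+1 -> R) :
    \sum_(k < m.+1) l k * v k = lm * v ord_max + \sum_(k < m) l' k * v (widen_ord (leqnSn m) k).
  by rewrite big_ord_recr addrC.
have [lm1|lm_ne1] := eqVneq lm 1.
  have l'0 k : l' k = 0.
    by apply: (psumr_eq0P (P := xpredT) (fun j _ => l'_ge0 j)); rewrite // sum_l' lm1 subrr.
  have rest0 (v : 'I_m.+1 -> R) : \sum_(k < m) l' k * v (widen_ord (leqnSn m) k) = 0.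
    by rewrite big1 // => k _; rewrite l'0 mul0r.
  apply: (convex_set_mem convK (Kp ord_max) (Kp ord_max) (l := 1)); rewrite ?ler01 ?lexx //.
    by move=> i; rewrite z_1 (sum_recr (fun k => (p k).1 i)) (rest0 (fun k => (p k).1 i)) lm1; ring.
  by rewrite z_2 (sum_recr (fun k => (p k).2)) (rest0 (fun k => (p k).2)) lm1; ring.
have lm_lt1 : 0 < 1 - lm by rewrite lt_def subr_eq0 eq_sym lm_ne1 -sum_l' sumr_ge0.
pose z_rest := ((fun i => \sum_(k < m) (l' k / (1 - lm)) * (p' k).1 i),
            \sum_(k < m) (l' k / (1 - lm)) * (p' k).2).
have K_rest : K z_rest.
  apply: IH; exists (fun k => l' k / (1 - lm)), p'; split; last split.
  - by move=> k; rewrite divr_ge0 // ltW.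
  - by rewrite -mulr_suml sum_l' divff // gt_eqF.
  - by split=> // k; apply: Kp.
have scale_rest (v : 'I_m.+1 -> R) : \sum_(k < m) l' k * v (widen_ord (leqnSn m) k) =
    (1 - lm) * \sum_(k < m) (l' k / (1 - lm)) * v (widen_ord (leqnSn m) k).
  by rewrite mulr_sumr; apply: eq_bigr => k _; field; rewrite gt_eqF.
apply: (convex_set_mem convK (Kp ord_max) K_rest (l := lm)).
- by rewrite l_ge0 -subr_ge0 ltW.
- by move=> i; rewrite z_1 (sum_recr (fun k => (p k).1 i)) (scale_rest (fun k => (p k).1 i)).
- by rewrite z_2 (sum_recr (fun k => (p k).2)) (scale_rest (fun k => (p k).2)).
Qed.

Lemma conv_conv_sub A B z : (forall y, A y -> conv B y) -> conv A z -> conv B z.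
Proof. by move=> AB /(conv_sub AB); apply: conv_sub_convex; apply: convex_conv. Qed.

End ConvexHull.

Section HullOfTheta.
Variables (R : realFieldType) (n : nat) (a b : R).
Implicit Types (x : vec R n) (i j : 'I_n).

Lemma Ssum_setc x i v : Ssum a (setc x i v) = Ssum a x + (v - x i).
Proof.
rewrite /Ssum (bigD1 i) //= [in RHS](bigD1 i) //= /setc eqxx.
rewrite (eq_bigr (fun k => x k - a)) => [|k /negbTE -> //]; ring.
Qed.

Definition transfer x i j d : vec R n := setc (setc x i (x i + d)) j (x j - d).

Lemma Ssum_transfer x i j d : i != j -> Ssum a (transfer x i j d) = Ssum a x.
Proof. by move=> ne_ij; rewrite !Ssum_setc /setc eq_sym (negbTE ne_ij); ring. Qed.

Lemma transfer_mix x i j d1 d2 k : i != j -> 0 < d1 + d2 ->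
  x k = d2 / (d1 + d2) * transfer x i j d1 k + (1 - d2 / (d1 + d2)) * transfer x j i d2 k.
Proof.
move=> ne_ij d_gt0; rewrite /transfer /setc.
case: (eqVneq k j) => [->|ne_kj]; first by rewrite eq_sym (negbTE ne_ij); field; rewrite gt_eqF.
case: (eqVneq k i) => [->|ne_ki]; first by field; rewrite gt_eqF.
by ring.
Qed.

(* Moving this amount from [j] to [i] pushes one of the two coordinates to the boundary. *)
Definition max_transfer x i j : R := Num.min (b - x i) (x j - a).

Lemma max_transfer_gt0 x i j : interior a b (x i) -> interior a b (x j) -> 0 < max_transfer x i j.
Proof. by move=> /andP[_ ?] /andP[? _]; rewrite lt_min !subr_gt0; apply/andP. Qed.

Lemma transfer_max_in_box x i j : in_box a b x -> i != j ->
  in_box a b (transfer x i j (max_transfer x i j)).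
Proof.
move=> hx ne_ij k; have /andP[? ?] := hx i; have /andP[? ?] := hx j.
rewrite /transfer /setc /max_transfer.
by case: eqP => _; [|case: eqP => _ //]; case: (leP (b - x i) (x j - a)) => ?;
  apply/andP; split; lra.
Qed.

Lemma interior_count_transfer_max x i j : i != j ->
  interior a b (x i) -> interior a b (x j) ->
  (interior_count a b (transfer x i j (max_transfer x i j)) < interior_count a b x)%N.
Proof.
move=> ne_ij xi xj; apply: proper_card; apply/properP; split.
  apply/subsetP => k; rewrite !inE /transfer /setc.
  by case: eqP => [->|_] //; case: eqP => [->|_].
rewrite /transfer /setc /max_transfer /interior; case: leP => ?.
  by exists i; rewrite !inE ?xi // (negbTE ne_ij) eqxx addrC subrK ltxx andbF.
by exists j; rewrite !inE ?xj // eqxx opprB addrC subrK ltxx.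
Qed.

Variables (phi : vec R n -> R) (alpha : R).
Hypothesis hab : a < b.
Hypothesis hphi : schur_concave_on (in_box a b) phi.

Lemma Salpha_sub_Theta z : Salpha a b phi alpha z -> Theta a b phi alpha z.
Proof.
by case=> hx /andP[ge_t le_t]; split; rewrite // le_t (le_trans (phi_ustar_le hab hphi hx)).
Qed.

Lemma Theta_sub_conv_Salpha z : Theta a b phi alpha z -> conv (Salpha a b phi alpha) z.
Proof.
case: z => x t [/= hx /andP[ge_t le_t]].
have [N] := ubnP (interior_count a b x); elim: N x hx ge_t => // N IH x hx ge_t lt_N.
have [le1|/card_gt1P[i [j [xi xj ne_ij]]]] := leqP (interior_count a b x) 1.
  by apply: conv_ext; split; rewrite //= le_t (le_trans (phi_ustar_ge hab hphi hx le1)).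
rewrite !inE in xi xj.
have step k l : k != l -> interior a b (x k) -> interior a b (x l) ->
    conv (Salpha a b phi alpha) (transfer x k l (max_transfer x k l), t).
  move=> ne_kl xk xl; apply: IH; first exact: transfer_max_in_box.
    by rewrite Ssum_transfer.
  by have := interior_count_transfer_max ne_kl xk xl; lia.
have d_gt0 : 0 < max_transfer x i j + max_transfer x j i.
  by rewrite addr_gt0 ?max_transfer_gt0.
have ne_ji : j != i by rewrite eq_sym.
apply: (convex_set_mem (@convex_conv _ _ _) (step i j ne_ij xi xj) (step j i ne_ji xj xi)
  (l := max_transfer x j i / (max_transfer x i j + max_transfer x j i))).
- have d1_gt0 := max_transfer_gt0 xi xj; have d2_gt0 := max_transfer_gt0 xj xi.
  apply/andP; split; first by rewrite divr_ge0 // ltW.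
  by rewrite ler_pdivrMr // mul1r lerDr ltW.
- by move=> k; apply: transfer_mix.
- by rewrite /=; ring.
Qed.

Lemma conv_Salpha_Theta z : conv (Salpha a b phi alpha) z <-> conv (Theta a b phi alpha) z.
Proof.
split; first exact/conv_sub/Salpha_sub_Theta.
exact/conv_conv_sub/Theta_sub_conv_Salpha.
Qed.

End HullOfTheta.

Section ChordConvexity.
Variable R : realFieldType.
Implicit Types (f : R -> R) (r s t : R).

Definition chord_le f r s t : Prop := (t - r) * f s <= (t - s) * f r + (s - r) * f t.

Definition chord_convex_on f lo hi : Prop :=
  forall r s t, lo <= r -> r <= s -> s <= t -> t <= hi -> chord_le f r s t.

Lemma chord_le_shift f c r s t :
  chord_le f (r + c) (s + c) (t + c) -> chord_le (fun v => f (v + c)) r s t.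
Proof.
have D u v : (u + c) - (v + c) = u - v by ring.
by rewrite /chord_le !D.
Qed.

Lemma eq_chord_le f g r s t : f r = g r -> f s = g s -> f t = g t ->
  chord_le f r s t -> chord_le g r s t.
Proof. by rewrite /chord_le => -> -> ->. Qed.

Lemma chord_le_via_right f r s q t : s < q -> r <= s -> s <= t ->
  chord_le f r s q -> chord_le f s q t -> chord_le f r s t.
Proof.
move=> lt_sq le_rs le_st h1 h2.
have ts_ge0 : 0 <= t - s by rewrite subr_ge0.
have sr_ge0 : 0 <= s - r by rewrite subr_ge0.
have qs_gt0 : 0 < q - s by rewrite subr_gt0.
rewrite /chord_le -(ler_pM2l qs_gt0).
by have := ler_wpM2l ts_ge0 h1; have := ler_wpM2l sr_ge0 h2; lra.
Qed.

Lemma chord_le_via_left f r q s t : q < s -> r <= q -> s <= t ->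
  chord_le f r q s -> chord_le f q s t -> chord_le f r s t.
Proof.
move=> lt_qs le_rq le_st h1 h2.
have ts_ge0 : 0 <= t - s by rewrite subr_ge0.
have sr_ge0 : 0 <= s - r by rewrite subr_ge0 (le_trans le_rq (ltW lt_qs)).
have sq_gt0 : 0 < s - q by rewrite subr_gt0.
rewrite /chord_le -(ler_pM2l sq_gt0).
by have := ler_wpM2l ts_ge0 h1; have := ler_wpM2l sr_ge0 h2; lra.
Qed.

Lemma chord_convex_on_glue f p q v : chord_convex_on f p q -> chord_convex_on f q v ->
  (forall r t, p <= r -> r < q -> q < t -> t <= v -> chord_le f r q t) ->
  chord_convex_on f p v.
Proof.
move=> left right kink r s t le_pr le_rs le_st le_tv.
have [le_tq|lt_qt] := lerP t q; first exact: left.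
have [le_qr|lt_rq] := lerP q r; first exact: right.
have [lt_sq|lt_qs|->] := ltgtP s q; last exact: kink.
- apply: (chord_le_via_right lt_sq le_rs le_st); first exact: left le_pr le_rs (ltW lt_sq) (lexx q).
  exact: kink (le_trans le_pr le_rs) lt_sq lt_qt le_tv.
- apply: (chord_le_via_left lt_qs (ltW lt_rq) le_st); first exact: kink le_pr lt_rq lt_qs (le_trans le_st le_tv).
  exact: right (lexx q) (ltW lt_qs) le_st le_tv.
Qed.

Lemma chord_convex_on_mix f lo hi s1 s2 l : chord_convex_on f lo hi ->
  lo <= s1 <= hi -> lo <= s2 <= hi -> 0 <= l <= 1 ->
  f (l * s1 + (1 - l) * s2) <= l * f s1 + (1 - l) * f s2.
Proof.
move=> convf; wlog le_12 : s1 s2 l / s1 <= s2 => [hwlog hs1 hs2 hl|].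
  have [le_12|lt_21] := lerP s1 s2; first exact: hwlog.
  have l'01 : 0 <= 1 - l <= 1 by case/andP: hl => ? ?; apply/andP; split; lra.
  have := hwlog s2 s1 (1 - l) (ltW lt_21) hs2 hs1 l'01.
  have -> : 1 - (1 - l) = l by ring.
  by rewrite addrC [X in _ <= X -> _]addrC.
move=> /andP[le_lo1 _] /andP[_ le_2hi] /andP[l_ge0 l_le1].
have [eq_12|ne_12] := eqVneq s1 s2.
  by rewrite -eq_12 -!mulrDl subrKC !mul1r.
have lt_12 : 0 < s2 - s1 by rewrite subr_gt0 lt_neqAle ne_12.
have le_1m : s1 <= l * s1 + (1 - l) * s2 by nra.
have le_m2 : l * s1 + (1 - l) * s2 <= s2 by nra.
have := convf _ _ _ le_lo1 le_1m le_m2 le_2hi; rewrite /chord_le.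
have -> : s2 - (l * s1 + (1 - l) * s2) = l * (s2 - s1) by ring.
have -> : l * s1 + (1 - l) * s2 - s1 = (1 - l) * (s2 - s1) by ring.
by move=> h; rewrite -(ler_pM2l lt_12); lra.
Qed.

Lemma ler_of_small_slack (X Y K e0 : R) : 0 < e0 ->
  (forall e, 0 < e -> e < e0 -> X <= Y + e * K) -> X <= Y.
Proof.
move=> e0_gt0 slack; apply/ler_addgt0Pr => e e_gt0.
pose d := Num.min (e0 / 2) (e / (`|K| + 1)).
have K1_gt0 : 0 < `|K| + 1 by rewrite ltr_pwDr.
have d_gt0 : 0 < d by rewrite lt_min !divr_gt0.
have d_lt : d < e0 by rewrite gt_min ltr_pdivrMr //; lra.
have dK : d * K <= e.
  have : d <= e / (`|K| + 1) by rewrite ge_min lexx orbT.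
  rewrite ler_pdivlMr // => le_dK1; have := ler_norm K; have := ltW d_gt0; nra.
by apply: le_trans (slack d d_gt0 d_lt) _; rewrite lerD2l.
Qed.

Lemma kink_inequality (w tau rho e G0 Gm Gr Gt F H C : R) :
  0 < w -> 0 < e -> e < tau -> e < rho ->
  G0 <= F -> tau * F <= (tau - e) * Gm + e * H -> w * H <= e * C + (w - e) * Gt ->
  rho * Gm <= e * Gr + (rho - e) * G0 ->
  w * (tau + rho) * G0 <= w * tau * Gr + w * rho * Gt + e * (w * (G0 - Gr) + rho * (C - Gt)).
Proof.
move=> w_gt0 e_gt0 lt_et lt_er h1 h2 h3 h4.
have c1 : 0 <= w * rho * tau by rewrite !mulr_ge0 //; lra.
have c2 : 0 <= w * rho by rewrite !mulr_ge0 //; lra.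
have c3 : 0 <= rho * e by rewrite !mulr_ge0 //; lra.
have c4 : 0 <= w * (tau - e) by rewrite !mulr_ge0 //; lra.
have := ler_wpM2l c1 h1; have := ler_wpM2l c2 h2.
have := ler_wpM2l c3 h3; have := ler_wpM2l c4 h4.
by move=> *; rewrite -(ler_pM2l e_gt0); lra.
Qed.

End ChordConvexity.

Lemma chord_convex_on_setc (R : realFieldType) (n : nat) (a b : R) (phi : vec R n -> R)
  (x : vec R n) (i : 'I_n) :
  componentwise_convex_on a b phi -> in_box a b x ->
  chord_convex_on (fun v => phi (setc x i v)) a b.
Proof.
move=> cc hx s1 s s2 le_a1 le_1s le_s2 le_2b.
have [eq_12|ne_12] := eqVneq s1 s2.
  have eq_s : s = s1 by apply/eqP; rewrite eq_le le_1s eq_12 le_s2.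
  by rewrite /chord_le eq_s eq_12 !subrr !mul0r addr0.
have lt_12 : 0 < s2 - s1 by rewrite subr_gt0 lt_neqAle ne_12 (le_trans le_1s le_s2).
pose l := (s2 - s) / (s2 - s1).
have l01 : 0 <= l <= 1.
  have s2s_ge0 : 0 <= s2 - s by rewrite subr_ge0.
  apply/andP; split; first by rewrite divr_ge0 // ltW.
  by rewrite ler_pdivrMr // mul1r lerD2l lerN2.
have s1_ab : a <= s1 <= b by rewrite le_a1 (le_trans le_1s (le_trans le_s2 le_2b)).
have s2_ab : a <= s2 <= b by rewrite le_2b (le_trans le_a1 (le_trans le_1s le_s2)).
have := cc x i s1 s2 l hx s1_ab s2_ab l01.
have -> : l * s1 + (1 - l) * s2 = s by rewrite /l; field; rewrite gt_eqF.
move/(ler_wpM2l (ltW lt_12)); rewrite /chord_le.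
suff -> : (s2 - s1) * (l * phi (setc x i s1) + (1 - l) * phi (setc x i s2)) =
  (s2 - s) * phi (setc x i s1) + (s - s1) * phi (setc x i s2) by [].
by rewrite /l; field; rewrite gt_eqF.
Qed.

Section ConvexityOfTheta.
Variables (R : realFieldType) (n : nat) (a b : R) (phi : vec R n -> R).
Hypothesis hab : a < b.
Hypothesis hphi : schur_concave_on (in_box a b) phi.
Hypothesis hcc : componentwise_convex_on a b phi.
Local Notation w := (b - a).
Let w_gt0 : 0 < w. Proof. by rewrite subr_gt0. Qed.

Definition phiu (s : R) : R := phi (ustar a b s).

Lemma setc_upiece k (lt_kn : (k < n)%N) r v :
  setc (upiece a b k r) (Ordinal lt_kn) (v + (a - w * k%:R)) = upiece a b k v.
Proof.
apply: functional_extensionality => j; rewrite /setc /upiece.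
have -> : (j == Ordinal lt_kn) = ((j : nat) == k) by [].
by case: eqP => [->|//]; rewrite ltnn; ring.
Qed.

Lemma chord_convex_on_piece k : (k < n)%N -> chord_convex_on phiu (k%:R * w) (k.+1%:R * w).
Proof.
move=> lt_kn r s t le_kr le_rs le_st le_tk.
have phiuE v : k%:R * w <= v <= k.+1%:R * w ->
    phiu v = phi (setc (upiece a b k r) (Ordinal lt_kn) (v + (a - w * k%:R))).
  by move=> hv; rewrite setc_upiece /phiu (ustar_piece hab (ltnW lt_kn) hv).
have hr : k%:R * w <= r <= k.+1%:R * w by apply/andP; split; lra.
have hs : k%:R * w <= s <= k.+1%:R * w by apply/andP; split; lra.
have ht : k%:R * w <= t <= k.+1%:R * w by apply/andP; split; lra.
have r_box : in_box a b (upiece a b k r : vec R n) by apply: upiece_in_box.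
apply: (eq_chord_le (esym (phiuE _ hr)) (esym (phiuE _ hs)) (esym (phiuE _ ht))).
apply: (chord_le_shift (f := fun v => phi (setc _ (Ordinal lt_kn) v)) (c := a - w * k%:R)).
apply: (chord_convex_on_setc _ hcc r_box); rewrite ?lerD2r //; move: hr ht; rewrite -natr1; lra.
Qed.

Section Kink.
Variable k : nat.
Hypothesis lt_k1n : (k.+1 < n)%N.
Local Notation q := (k.+1%:R * w).
Let ik : 'I_n := Ordinal (ltnW lt_k1n).
Let ik1 : 'I_n := Ordinal lt_k1n.

Definition kink_vec (p p' : R) : vec R n := fun j =>
  if (j < k)%N then b else if (j : nat) == k then p else if (j : nat) == k.+1 then p' else a.

Lemma setc_kink_vec_k (p p' v : R) : setc (kink_vec p p') ik v = kink_vec v p'.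
Proof.
apply: functional_extensionality => j; rewrite /setc /kink_vec.
have -> : (j == ik) = ((j : nat) == k) by [].
by case: eqP => [->|//]; rewrite ltnn.
Qed.

Lemma setc_kink_vec_k1 (p p' v : R) : setc (kink_vec p p') ik1 v = kink_vec p v.
Proof.
apply: functional_extensionality => j; rewrite /setc /kink_vec.
have -> : (j == ik1) = ((j : nat) == k.+1) by [].
by case: eqP => [->|//]; rewrite ltnNge leqnSn /= gtn_eqF.
Qed.

Lemma kink_vec_left (e : R) : kink_vec (b - e) a = upiece a b k (q - e).
Proof.
apply: functional_extensionality => j; rewrite /kink_vec /upiece.
by case: ifP => // _; case: eqP => _; [rewrite -natr1; lra | case: ifP].
Qed.

Lemma kink_vec_right (tau : R) : kink_vec b (a + tau) = upiece a b k.+1 (q + tau).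
Proof.
apply: functional_extensionality => j; rewrite /kink_vec /upiece ltnS.
by case: ltngtP => //= _; case: eqP => // _; ring.
Qed.

Lemma kink_vec_in_box (p p' : R) : a <= p <= b -> a <= p' <= b -> in_box a b (kink_vec p p').
Proof.
move=> hp hp' j; rewrite /kink_vec; case: ifP => _; first by rewrite lexx ltW.
by case: eqP => _ //; case: eqP => _ //; rewrite lexx ltW.
Qed.

Lemma Ssum_kink_vec (p p' : R) : Ssum a (kink_vec p p') = q + (p - b) + (p' - a).
Proof.
rewrite -(setc_kink_vec_k1 p a) -(setc_kink_vec_k b a) !Ssum_setc.
have -> : Ssum a (kink_vec b a) = q.
  by rewrite -[in LHS](subr0 b) kink_vec_left subr0 Ssum_upiece // ltnW.
have ik1_ik : (ik1 == ik) = false by rewrite -val_eqE /= gtn_eqF.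
by rewrite /setc ik1_ik /kink_vec /= ltnn ltnNge leqnSn (gtn_eqF (ltnSn k)) !eqxx.
Qed.

Lemma phiu_le_kink_vec (e : R) : 0 <= e <= w -> phiu q <= phi (kink_vec (b - e) (a + e)).
Proof.
move=> /andP[e_ge0 le_ew]; have box_be : a <= b - e <= b by apply/andP; split; lra.
have box_ae : a <= a + e <= b by apply/andP; split; lra.
have := phi_ustar_le hab hphi (kink_vec_in_box box_be box_ae); rewrite Ssum_kink_vec.
by have -> : q + (b - e - b) + (a + e - a) = q by ring.
Qed.

Lemma kink_vec_convex_k1 (e tau : R) : 0 <= e <= tau -> tau <= w ->
  tau * phi (kink_vec (b - e) (a + e)) <=
    (tau - e) * phi (kink_vec (b - e) a) + e * phi (kink_vec (b - e) (a + tau)).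
Proof.
move=> /andP[e_ge0 le_et] le_tw.
have box_be : a <= b - e <= b by apply/andP; split; lra.
have box_a : a <= a <= b by rewrite lexx ltW.
have le_ae : a <= a + e by lra.
have le_eta : a + e <= a + tau by lra.
have le_tab : a + tau <= b by lra.
have := chord_convex_on_setc ik1 hcc (kink_vec_in_box box_be box_a) (lexx a) le_ae le_eta le_tab.
rewrite /chord_le !setc_kink_vec_k1.
have -> : a + tau - a = tau by ring.
have -> : a + tau - (a + e) = tau - e by ring.
by have -> : a + e - a = e by ring.
Qed.

Lemma kink_vec_convex_k (e tau : R) : 0 <= e <= w -> 0 <= tau <= w ->
  w * phi (kink_vec (b - e) (a + tau)) <=
    e * phi (kink_vec a (a + tau)) + (w - e) * phi (kink_vec b (a + tau)).
Proof.
move=> /andP[e_ge0 le_ew] /andP[tau_ge0 le_tw].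
have box_be : a <= b - e <= b by apply/andP; split; lra.
have box_at : a <= a + tau <= b by apply/andP; split; lra.
have le_abe : a <= b - e by lra.
have le_beb : b - e <= b by lra.
have := chord_convex_on_setc ik hcc (kink_vec_in_box box_be box_at) (lexx a) le_abe le_beb (lexx b).
rewrite /chord_le !setc_kink_vec_k.
have -> : b - (b - e) = e by ring.
by have -> : b - e - a = w - e by ring.
Qed.

(* Moving [e] from coordinate [k] to [k + 1] of [u^q] keeps the sum, so Schur concavity
   bounds [phiu q]; convexity in coordinate [k + 1], then in coordinate [k], and the
   chord inequality left of [q] bound the result by [phiu r] and [phiu t] up to [O(e)]. *)
Lemma kink_slack r t e : chord_convex_on phiu 0 q -> 0 <= r ->
  0 < e -> e < q - r -> e < t - q -> t <= q + w ->
  w * ((t - r) * phiu q) <= w * ((t - q) * phiu r + (q - r) * phiu t)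
    + e * (w * (phiu q - phiu r) + (q - r) * (phi (kink_vec a (a + (t - q))) - phiu t)).
Proof.
move=> convq r_ge0 e_gt0 lt_e_qr lt_e_tq le_tw.
have q_eq : q = k%:R * w + w by rewrite -natr1 mulrDl mul1r.
have phiu_left : phiu (q - e) = phi (kink_vec (b - e) a).
  rewrite kink_vec_left /phiu (ustar_piece hab (ltnW (ltnW lt_k1n))) //.
  by apply/andP; split; lra.
have phiu_right : phiu t = phi (kink_vec b (a + (t - q))).
  rewrite kink_vec_right subrKC /phiu (ustar_piece hab (ltnW lt_k1n)) //.
  by rewrite -(natr1 k.+1) mulrDl mul1r; apply/andP; split; lra.
have e_w : 0 <= e <= w by apply/andP; split; lra.
have e_tq : 0 <= e <= t - q by apply/andP; split; lra.
have tq_w : 0 <= t - q <= w by apply/andP; split; lra.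
have schur_q := phiu_le_kink_vec e_w.
have convex_k1 := kink_vec_convex_k1 e_tq (proj2 (andP tq_w)).
have convex_k := kink_vec_convex_k e_w tq_w.
rewrite -phiu_left in convex_k1; rewrite -phiu_right in convex_k.
have chord_left : (q - r) * phiu (q - e) <= e * phiu r + (q - r - e) * phiu q.
  have := convq r (q - e) q r_ge0 _ _ (lexx q); rewrite /chord_le.
  have -> : q - (q - e) = e by ring.
  have -> : q - e - r = q - r - e by ring.
  by apply; lra.
have := kink_inequality w_gt0 e_gt0 lt_e_tq lt_e_qr schur_q convex_k1 convex_k chord_left.
have -> : t - r = t - q + (q - r) by ring.
lra.
Qed.

Lemma chord_le_kink r t : chord_convex_on phiu 0 q -> 0 <= r -> r < q -> q < t -> t <= q + w ->
  chord_le phiu r q t.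
Proof.
move=> convq r_ge0 lt_rq lt_qt le_tw; rewrite /chord_le -(ler_pM2l w_gt0).
have e0_gt0 : 0 < Num.min (q - r) (t - q) by rewrite lt_min !subr_gt0 lt_rq.
apply: (ler_of_small_slack e0_gt0) => e e_gt0; rewrite lt_min => /andP[lt_e_qr lt_e_tq].
exact: kink_slack.
Qed.

End Kink.

Lemma chord_convex_on_prefix k : (k < n)%N -> chord_convex_on phiu 0 (k.+1%:R * w).
Proof.
elim: k => [|k IH] lt_kn; first by have := chord_convex_on_piece lt_kn; rewrite mul0r.
have convk := IH (ltnW lt_kn).
apply: (chord_convex_on_glue convk (chord_convex_on_piece lt_kn)) => r t r_ge0 lt_rq lt_qt le_tk.
apply: (chord_le_kink lt_kn convk r_ge0 lt_rq lt_qt).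
by rewrite -(natr1 k.+1) mulrDl mul1r in le_tk.
Qed.

Lemma chord_convex_on_phiu : chord_convex_on phiu 0 (n%:R * w).
Proof.
have [n0|n_gt0] := posnP n; last first.
  have lt_n1n : (n.-1 < n)%N by rewrite ltn_predL.
  by have := chord_convex_on_prefix lt_n1n; rewrite prednK.
move=> r s t r_ge0 le_rs le_st; rewrite n0 mul0r => le_t0.
have [-> ->] : s = r /\ t = r by split; lra.
by rewrite /chord_le !subrr !mul0r addr0.
Qed.

Lemma convex_Theta alpha : convex_set (Theta a b phi alpha).
Proof.
move=> [x1 t1] [x2 t2] l [/= hx1 /andP[ge_t1 le_t1]] [/= hx2 /andP[ge_t2 le_t2]] /andP[l_ge0 l_le1].
have Ssum_mix : Ssum a (fun i => l * x1 i + (1 - l) * x2 i) = l * Ssum a x1 + (1 - l) * Ssum a x2.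
  by rewrite /Ssum 2!mulr_sumr -big_split /=; apply: eq_bigr => i _; ring.
split=> /=.
  move=> i; have /andP[? ?] := hx1 i; have /andP[? ?] := hx2 i; apply/andP; split; nra.
apply/andP; split; last by nra.
rewrite Ssum_mix; apply: le_trans (chord_convex_on_mix chord_convex_on_phiu _ _ _) _.
- exact: Ssum_range.
- exact: Ssum_range.
- by rewrite l_ge0.
- by rewrite /phiu; nra.
Qed.

End ConvexityOfTheta.

Theorem mainTheorem14 (R : realFieldType) (n : nat) (a b : R) (hab : a < b)
  (phi : vec R n -> R) (hphi : schur_concave_on (in_box a b) phi) (alpha : R) :
  (forall z, conv (Salpha a b phi alpha) z <-> conv (Theta a b phi alpha) z) /\
  (componentwise_convex_on a b phi -> convex_set (Theta a b phi alpha)).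
Proof.
split=> [z|hcc]; first exact: conv_Salpha_Theta.
exact: convex_Theta.
Qed.
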